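(* Let ${\bf r}=(r_0,r_1,\dots)$ be a finitely supported sequence of nonnegative integers with $n=\sum_{d\ge1}r_d\ge1$, $\ell=-\sum_{d\ge0}(d-1)r_d\ge1$. Then the polynomial identity $$\sum_{F\in\mathscr F({\bf r})}\prod_{v\in I(F)}\frac{((d_v-1)h_v+1)x+1-h_v}{d_vh_v}=\frac{\ell}{r_0}\cdot\frac{(r_0x)(r_0x-1)\cdots(r_0x-n+1)}{r_1!\,r_2!\cdots}$$ holds if and only if the polynomial identity $$\sum_{F\in\mathscr F({\bf r})}\prod_{v\in I(F)}\frac{(d_v+x)h_v-x}{d_vh_v}=\frac{\ell}{r_1!\,r_2!\cdots}\prod_{i=1}^{n-1}\big(r_0+i(1+x)\big)$$ holds.
   Context: A plane tree is an unlabelled rooted tree in which the children of every vertex are linearly ordered; a plane forest is a finite linearly ordered sequence of plane trees. For vertices $u,v$ in a tree, $v$ is a descendant of $u$ if $u$ lies on the path from the root to $v$ (so $u$ is a descendant of itself). The degree $d_v$ is the number of children of $v$; $v$ is internal if $d_v\ge1$. $I(F)$ is the set of internal vertices of $F$. The hook length $h_v$ of an internal vertex $v$ is the number of internal vertices among the descendants of $v$ (including $v$). A plane forest has type ${\bf r}$ if it has exactly $r_i$ vertices of degree $i$ for all $i\ge0$; $\mathscr F({\bf r})$ is the set of such forests. *)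

From mathcomp Require Import all_boot all_algebra.
Set Implicit Arguments. Unset Strict Implicit. Unset Printing Implicit Defensive.
Import GRing.Theory Num.Theory.

Inductive ptree := Node of seq ptree.

Definition pforest := seq ptree.

Fixpoint degs (t : ptree) : seq nat :=
  let: Node ts := t in size ts :: flatten (map degs ts).

Definition fdegs (F : pforest) : seq nat := flatten (map degs F).

Definition nint (t : ptree) : nat := count (fun d => 0 < d) (degs t).

(* list of pairs (d_v, h_v) over the internal vertices v of a tree;
   h_v = number of internal descendants of v (including v) *)
Fixpoint ivdata (t : ptree) : seq (nat * nat) :=
  let: Node ts := t in
  (if ts is [::] then [::] else [:: (size ts, nint (Node ts))])
  ++ flatten (map ivdata ts).

Definition fivdata (F : pforest) : seq (nat * nat) := flatten (map ivdata F).

(* a type r = (r_0, r_1, ...) is a finitely supported sequence, given by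
   a seq with r_i = nth 0 r i (zero beyond its size) *)
Definition rr (r : seq nat) (i : nat) : nat := nth 0 r i.

Definition has_type (r : seq nat) (F : pforest) : Prop :=
  forall i, count_mem i (fdegs F) = rr r i.

Definition nn (r : seq nat) : nat := \sum_(1 <= d < size r) rr r d.

Definition ll (r : seq nat) : int :=
  - \sum_(0 <= d < size r) ((d%:Z - 1) * (rr r d)%:Z).

Definition rfact (r : seq nat) : nat := \prod_(1 <= d < size r) (rr r d)`!.

Local Open Scope ring_scope.

Definition forest_sum (s : seq pforest) (w : nat -> nat -> {poly rat}) : {poly rat} :=
  \sum_(F <- s) \prod_(p <- fivdata F) w p.1 p.2.

Definition w1 (d h : nat) : {poly rat} :=
  ((((d%:Z - 1) * h%:Z + 1)%:~R *: 'X + (1 - h%:Z)%:~R%:P)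
     * ((d * h)%:R^-1)%:P).

Definition w2 (d h : nat) : {poly rat} :=
  ((d * h)%:R%:P + (h%:Z - 1)%:~R *: 'X) * ((d * h)%:R^-1)%:P.

Definition rhs1 (r : seq nat) : {poly rat} :=
  ((ll r)%:~R / (rr r 0)%:R / (rfact r)%:R)%:P
  * \prod_(0 <= i < nn r) ((rr r 0)%:R *: 'X - i%:R%:P).

Definition rhs2 (r : seq nat) : {poly rat} :=
  ((ll r)%:~R / (rfact r)%:R)%:P
  * \prod_(1 <= i < nn r) ((rr r 0)%:R%:P + i%:R *: (1 + 'X)).

(* The change of variable x = -(y + 1)/y, i.e. y = -1/(x + 1), turns each
   vertex weight of the first identity into y times the corresponding vertex
   weight of the second one: ((d-1)h+1)y + 1 - h = y((d+x)h - x).  Every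
   forest of type r has exactly n internal vertices, so the left-hand sides
   satisfy L1(y) = y^n L2(x).  The right-hand sides are related in the same
   way, since r0 y - i = y (r0 + i(1 + x)).  As the substitution is a
   bijection between y <> 0 and x <> -1, and polynomials agreeing off one
   point are equal, the two identities are equivalent. *)

From mathcomp Require Import all_boot all_order all_algebra ring.
From Stdlib Require List.
Import Order.TTheory GRing.Theory Num.Theory.

Definition ptree_nested_ind (P : ptree -> Prop)
    (IH : forall ts, List.Forall P ts -> P (Node ts)) : forall t, P t :=
  fix ind t := let: Node ts := t in
    IH ts ((fix ind_seq ts : List.Forall P ts :=
              if ts is t :: ts' then List.Forall_cons _ (ind t) (ind_seq ts')
              else List.Forall_nil _) ts).

Lemma size_ivdata t : size (ivdata t) = nint t.
Proof.
elim/ptree_nested_ind: t => ts IHts; rewrite /nint /= size_cat.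
have -> : size (flatten (map ivdata ts)) = count (fun d => 0 < d) (fdegs ts).
  by elim: IHts => //= t ts' Ht _ IH; rewrite size_cat Ht IH /fdegs /= count_cat.
by case: ts IHts.
Qed.

Lemma size_fivdata F : size (fivdata F) = count (fun d => 0 < d) (fdegs F).
Proof.
elim: F => //= t F IH.
by rewrite /fivdata /fdegs /= size_cat count_cat size_ivdata -IH.
Qed.

Lemma count_gt0_sum_count_mem N (s : seq nat) : all (fun d => d < N) s ->
  count (fun d => 0 < d) s = \sum_(1 <= d < N) count_mem d s.
Proof.
elim: s => [|x s IH] /=; first by rewrite big1.
case/andP => xN /IH ->; rewrite big_split /=; congr (_ + _).
have -> : \sum_(1 <= d < N) (x == d) = \sum_(1 <= d < N | d == x) 1.
  by rewrite [RHS]big_mkcond; apply: eq_bigr => d _; rewrite eq_sym; case: eqP.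
by rewrite big_nat1_eq xN andbT; case: x {xN}.
Qed.

Lemma size_fivdata_type r F : has_type r F -> size (fivdata F) = nn r.
Proof.
move=> typeF; rewrite size_fivdata (@count_gt0_sum_count_mem (size r)).
  by rewrite /nn; apply: eq_bigr => d _; rewrite typeF.
apply/allP => d dF; rewrite ltnNge; apply: contraL dF => /(nth_default 0) r_d.
by rewrite -has_pred1 has_count typeF /rr r_d.
Qed.

Local Open Scope ring_scope.

Lemma rr0_gt0 r : 1 <= ll r -> (0 < rr r 0)%N.
Proof.
apply: contraTT; rewrite -eqn0Ngt => /eqP r0_eq0.
rewrite -ltNge /ll (@le_lt_trans _ _ 0) // oppr_le0.
apply: sumr_ge0 => -[|d] _; first by rewrite r0_eq0 mulr0.
by rewrite mulr_ge0 // subr_ge0 lez_nat.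
Qed.

Definition mobius {R : fieldType} (y : R) : R := - (y + 1) / y.

Lemma mobius_inv {R : fieldType} (x : R) : x + 1 != 0 ->
  mobius (- (x + 1)^-1) = x.
Proof.
by move=> x1_neq0; rewrite /mobius; field; rewrite x1_neq0 oppr_eq0 oner_eq0.
Qed.

Lemma eq_poly_off (R : numDomainType) (p q : {poly R}) (a : R) :
  (forall x, x != a -> p.[x] = q.[x]) -> p = q.
Proof.
move=> pq; apply/eqP; rewrite -subr_eq0; apply/eqP.
pose rs := [seq a + i.+1%:R | i <- iota 0 (size (p - q))].
apply: (@roots_geq_poly_eq0 _ _ rs); last by rewrite size_map size_iota.
  apply/allP => _ /mapP [i _ ->].
  by rewrite /root hornerD hornerN pq ?subrr // -subr_eq0 addrC addKr pnatr_eq0.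
by rewrite map_inj_uniq ?iota_uniq // => i j /addrI /eqP; rewrite eqr_nat => /eqP [].
Qed.

Lemma mobius_transfer (R : numFieldType) (n : nat) (p1 p2 q1 q2 : {poly R}) :
    (forall y, y != 0 -> p1.[y] = y ^+ n * q1.[mobius y]) ->
    (forall y, y != 0 -> p2.[y] = y ^+ n * q2.[mobius y]) ->
  p1 = p2 <-> q1 = q2.
Proof.
move=> pq1 pq2; split=> [p12 | q12]; last first.
  by apply: (@eq_poly_off _ _ _ 0) => y y_neq0; rewrite pq1 // pq2 // q12.
apply: (@eq_poly_off _ _ _ (-1)) => x; rewrite -addr_eq0 => x1_neq0.
set y := - (x + 1)^-1; have y_neq0 : y != 0 by rewrite oppr_eq0 invr_eq0.
have -> : x = mobius y by rewrite mobius_inv.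
by apply: (mulfI (expf_neq0 n y_neq0)); rewrite -pq1 // -pq2 // p12.
Qed.

Lemma horner_w1 (d h : nat) (y : rat) : y != 0 ->
  (w1 d h).[y] = y * (w2 d h).[mobius y].
Proof.
move=> y_neq0; rewrite /w1 /w2 /mobius !hornerE.
(* The identity is linear in 1/(d h), which may be the junk value 0^-1. *)
set c := (d * h)%:R^-1; clearbody c.
by rewrite !rmorphD !rmorphM !rmorphB /=; field.
Qed.

Lemma horner_prod_w1 (vs : seq (nat * nat)) (y : rat) : y != 0 ->
  (\prod_(v <- vs) w1 v.1 v.2).[y] =
  y ^+ size vs * (\prod_(v <- vs) w2 v.1 v.2).[mobius y].
Proof.
move=> y_neq0; rewrite !horner_prod.
elim: vs => [|v vs IH]; first by rewrite !big_nil mul1r.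
by rewrite !big_cons IH horner_w1 // exprS; ring.
Qed.

Lemma horner_forest_sum_w1 r (s : seq pforest) (y : rat) : y != 0 ->
    (forall F, List.In F s -> has_type r F) ->
  (forest_sum s w1).[y] = y ^+ nn r * (forest_sum s w2).[mobius y].
Proof.
move=> y_neq0; rewrite /forest_sum; elim: s => [|F s IH] types_s.
  by rewrite !big_nil !hornerE.
rewrite !big_cons !hornerD mulrDr IH => [|G sG]; last by apply: types_s; right.
by rewrite horner_prod_w1 // (@size_fivdata_type r) //; apply: types_s; left.
Qed.

Lemma horner_rhs1 r (y : rat) : (0 < rr r 0)%N -> (1 <= nn r)%N -> y != 0 ->
  (rhs1 r).[y] = y ^+ nn r * (rhs2 r).[mobius y].
Proof.
move=> r0_gt0 n_gt0 y_neq0; rewrite /rhs1 /rhs2 !hornerM !hornerC !horner_prod.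
have powE : y ^+ nn r = y * \prod_(1 <= i < nn r) y.
  by rewrite prodr_const_nat -exprS subn1 prednK.
rewrite (big_ltn n_gt0) powE.
have r0_neq0 : (rr r 0)%:R != 0 :> rat by rewrite pnatr_eq0 -lt0n.
have rfact_neq0 : (rfact r)%:R != 0 :> rat.
  by rewrite pnatr_eq0 -lt0n prodn_gt0 // => d; apply: fact_gt0.
have factorE : \prod_(1 <= i < nn r) ((rr r 0)%:R *: 'X - i%:R%:P).[y] =
    \prod_(1 <= i < nn r) y *
    \prod_(1 <= i < nn r) ((rr r 0)%:R%:P + i%:R *: (1 + 'X)).[mobius y].
  by rewrite -big_split; apply: eq_bigr => i _ /=; rewrite /mobius !hornerE; field.
by rewrite factorE !hornerE /=; field; rewrite r0_neq0 rfact_neq0.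
Qed.

Theorem lemma3p2 (r : seq nat) (s : seq pforest)
  (Hs_nodup : List.NoDup s)
  (Hs : forall F : pforest, List.In F s <-> has_type r F)
  (Hn : (1 <= nn r)%N) (Hl : 1 <= ll r) :
  forest_sum s w1 = rhs1 r <-> forest_sum s w2 = rhs2 r.
Proof.
apply: (@mobius_transfer _ (nn r)) => y y_neq0.
  by apply: horner_forest_sum_w1 => // F /Hs.
by rewrite horner_rhs1 // rr0_gt0.
Qed.
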